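(* Let $p>0$ and let $f$ be a $p$-knowable Boolean function. Then for every $k\in\mathbb N$, $$I_k(f)\le\frac{\mathbb E[(\max W(f))^p]}{k^p}.$$
   Context: Let $\Omega=\{-1,1\}$ and $\Omega^\infty=\{-1,1\}^{\mathbb N}$ with the uniform product probability measure; $\omega$ denotes a uniformly random element. A Boolean function is a measurable map $f:\Omega^\infty\to\Omega$. $\omega^{(k)}$ is $\omega$ with bit $k$ flipped; $I_k(f)=\mathbb P(f(\omega^{(k)})\ne f(\omega))$. A set $W\subseteq\mathbb N$ is a witness set for $f$ at $\omega$ if there is an event $A$ with $\mathbb P(A)=1$ such that for all $\tilde\omega\in A$: if $\tilde\omega_i=\omega_i$ for all $i\in W$ then $f(\tilde\omega)=f(\omega)$. $f$ is finitary if almost surely a finite witness set exists; then $W(f)(\omega)$ denotes the least finite witness set in the order: smaller maximum first, then smaller cardinality, then lexicographic. $f$ is $p$-knowable if it is finitary and $\mathbb E[(\max W(f))^p]<\infty$. *)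

From HB Require Import structures.
From mathcomp Require Import all_boot all_order all_algebra finmap.
From mathcomp Require Import all_classical all_reals all_analysis.

Set Implicit Arguments.
Unset Strict Implicit.
Unset Printing Implicit Defensive.
Import Order.TTheory GRing.Theory Num.Theory.

Local Open Scope classical_set_scope.
Local Open Scope ring_scope.

(* Omega = {-1,1} is encoded by bool (true <-> 1, false <-> -1).
   Omega^infty = {-1,1}^N with N = {1,2,3,...}: a sample point is
   w : nat -> bool, where the paper's coordinate omega_i (i >= 1) is
   stored at position i.-1, see [coord]. *)
Definition Omega := nat -> bool.

Definition coord (w : Omega) (i : nat) : bool := w i.-1.

Definition coord_events : set (set Omega) :=
  [set A | exists i b, A = [set w | w i = b]].

Definition OmegaM := g_sigma_algebraType coord_events.

(* P is the uniform product measure: every cylinder fixing the first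
   n coordinates has probability 2^-n.  (These cylinders form a pi-system
   generating the product sigma-algebra, so this determines P uniquely.) *)
Definition uniform_product {R : realType} (P : probability OmegaM R) : Prop :=
  forall (n : nat) (v : Omega),
    P [set w : OmegaM | forall i, (i < n)%N -> w i = v i] = ((2%:R ^- n : R))%:E.

Definition flip (k : nat) (w : Omega) : Omega :=
  fun j => if j == k.-1 then ~~ w j else w j.

Definition boolean_function (f : OmegaM -> bool) : Prop :=
  measurable [set w : OmegaM | f w].

Definition influence {R : realType} (P : probability OmegaM R)
  (f : OmegaM -> bool) (k : nat) : \bar R :=
  P [set w : OmegaM | f (flip k w) != f w].

(* W (a set of paper indices, i.e. of positive naturals) is a witness set
   for f at w *)
Definition witness {R : realType} (P : probability OmegaM R)
  (f : OmegaM -> bool) (w : OmegaM) (W : set nat) : Prop :=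
  exists A : set OmegaM, measurable A /\ P A = 1%E /\
    forall v : OmegaM, A v ->
      (forall i, W i -> coord v i = coord w i) -> f v = f w.

Definition fin_witness {R : realType} (P : probability OmegaM R)
  (f : OmegaM -> bool) (w : OmegaM) (W : {fset nat}) : Prop :=
  (forall i, i \in W -> (0 < i)%N) /\ witness P f w [set` W].

Definition finitary {R : realType} (P : probability OmegaM R)
  (f : OmegaM -> bool) : Prop :=
  {ae P, forall w, exists W : {fset nat}, fin_witness P f w W}.

(* max of a finite set of positive naturals (0 for the empty set) *)
Definition fmax (W : {fset nat}) : nat := \max_(i <- W) i.

Fixpoint lexlt (s t : seq nat) : bool :=
  match s, t with
  | [::], _ :: _ => true
  | x :: s', y :: t' => (x < y)%N || ((x == y) && lexlt s' t')
  | _, _ => false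
  end.

Definition Wle (W1 W2 : {fset nat}) : bool :=
  (W1 == W2) ||
  [|| (fmax W1 < fmax W2)%N,
      (fmax W1 == fmax W2) && (#|` W1| < #|` W2|)%N |
      [&& fmax W1 == fmax W2, #|` W1| == #|` W2| &
          lexlt (sort leq W1) (sort leq W2)]].

(* W(f)(w): the least finite witness set (fset0 if none exists) *)
Definition Wf {R : realType} (P : probability OmegaM R)
  (f : OmegaM -> bool) (w : OmegaM) : {fset nat} :=
  xget fset0 [set W | fin_witness P f w W /\
                      forall W', fin_witness P f w W' -> Wle W W'].

Definition EmaxWp {R : realType} (P : probability OmegaM R)
  (f : OmegaM -> bool) (p : R) : \bar R :=
  (\int[P]_w (((fmax (Wf P f w))%:R : R) `^ p)%:E)%E.

Definition knowable {R : realType} (P : probability OmegaM R)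
  (f : OmegaM -> bool) (p : R) : Prop :=
  finitary P f /\ (EmaxWp P f p < +oo)%E.

From HB Require Import structures.
From mathcomp Require Import all_boot all_order all_algebra finmap.
From mathcomp Require Import all_classical all_reals all_analysis.
From mathcomp Require Import zify.
Import Order.TTheory GRing.Theory Num.Theory.
Local Open Scope classical_set_scope.
Local Open Scope ring_scope.

(* Flipping bit [k] can change [f] at [w] only if [k] lies beyond the least
   witness set of [w]: otherwise the witness already pins down [f] on the whole
   cylinder of the first [k - 1] bits of [w], and [flip k w] lies in that
   cylinder.  This holds only up to null sets, and since the witness condition
   is "almost surely", one collects the finitely many null events
   [cyl (k - 1) v `&` [f = b]] and uses that [flip k] preserves the uniform
   measure.  Hence [I_k(f) <= P(max W(f) >= k)], and Markov's inequality for
   [(max W(f))^p] gives the bound. *)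

Lemma exists_minimal_in_seq {T : eqType} {le : rel T} (Q : T -> Prop) (s : seq T) :
  transitive le -> total le -> (exists2 x, x \in s & Q x) ->
  exists x, [/\ x \in s, Q x & forall y, y \in s -> Q y -> le x y].
Proof.
move=> le_trans le_total [x0 x0s Qx0].
have Qs y : y \in sort le [seq x <- s | `[< Q x >]] = (y \in s) && `[< Q y >].
  by rewrite mem_sort mem_filter andbC.
case sQ: (sort le [seq x <- s | `[< Q x >]]) => [|x t].
  by move: (Qs x0); rewrite sQ in_nil x0s /= => /esym/asboolPn.
have /andP[xs /asboolP Qx] : (x \in s) && `[< Q x >] by rewrite -Qs sQ mem_head.
exists x; split => // y ys Qy.
have : y \in x :: t by rewrite -sQ Qs ys; apply/asboolP.
have := sort_sorted le_total [seq x <- s | `[< Q x >]].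
rewrite sQ => /(order_path_min le_trans)/allP x_le.
rewrite inE => /orP[/eqP->|/x_le//].
by have := le_total x x; rewrite orbb.
Qed.

Lemma negligible_null_part d (T : measurableType d) (R : realType)
    (mu : {measure set T -> \bar R}) (I : finType) (F : I -> set T) :
  (forall i, measurable (F i)) ->
  mu.-negligible (\big[setU/set0]_(i | mu (F i) == 0%E) F i).
Proof.
move=> mF; elim/big_ind: _ => [|A B|i /eqP Fi0]; first exact: negligible_set0.
  exact: negligibleU.
by exists (F i); split.
Qed.

(* [g] need not be measurable: the bound is read off the definition of the
   integral as a supremum over simple functions below [g]. *)
Lemma mul_measure_le_ge0_integral d (T : measurableType d) (R : realType)
    (mu : {measure set T -> \bar R}) (g : T -> \bar R) (A : set T) (c : R) :
  measurable A -> 0 <= c -> (forall x, 0 <= g x)%E ->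
  (forall x, A x -> c%:E <= g x)%E -> (c%:E * mu A <= \int[mu]_x g x)%E.
Proof.
move=> mA c0 g0 cg; rewrite ge0_integralE //.
pose h := scale_nnsfun (indic_nnsfun R mA) c0.
apply: le_trans (ereal_sup_ubound _); last first.
  exists h => //= x; rewrite patch_setT measurable_realfun.mindicE /=.
  have [Ax|nAx] := pselect (A x).
    by rewrite mem_set // mulr1 cg.
  by rewrite memNset // mulr0.
by rewrite sintegralrM /measurable_realfun.mindic sintegral_indic.
Qed.

Definition cyl (n : nat) (v : Omega) : set OmegaM :=
  [set w | forall i, (i < n)%N -> w i = v i].

Lemma measurable_coord i b : measurable [set w : OmegaM | w i = b].
Proof. by apply: sub_sigma_algebra; exists i, b. Qed.

Lemma measurable_cyl n v : measurable (cyl n v).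
Proof.
elim: n => [|n IH].
  by rewrite (_ : cyl 0 v = setT) //; apply/seteqP; split.
rewrite (_ : cyl n.+1 v = cyl n v `&` [set w | w n = v n]).
  exact: measurableI (measurable_coord _ _).
apply/seteqP; split => w /=.
  by move=> wv; split; [move=> i ilt; apply: wv; lia | apply: wv].
by move=> [wv wvn] i; rewrite ltnS leq_eqVlt => /orP[/eqP->//|]; exact: wv.
Qed.

Definition cylinders : set (set OmegaM) :=
  [set A | A = set0 \/ exists n v, A = cyl n v].

Lemma cylinders_setI_closed : setI_closed cylinders.
Proof.
have nested n m v u : (n <= m)%N -> cylinders (cyl n v `&` cyl m u).
  move=> nm; have [vu|vNu] := pselect (forall i, (i < n)%N -> v i = u i).
    right; exists m, u; apply/seteqP; split => w /=; first by case.
    by move=> wu; split => // i ilt; rewrite vu ?wu //; apply: leq_trans nm.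
  left; apply/seteqP; split => w //= [wv wu]; apply: vNu => i ilt.
  by rewrite -wv // wu //; apply: leq_trans nm.
move=> A B [->|[n [v ->]]]; first by rewrite set0I; left.
move=> [->|[m [u ->]]]; first by rewrite setI0; left.
by case: (leqP n m) => [|/ltnW] nm; [|rewrite setIC]; apply: nested.
Qed.

(* [window n v 0] is a cylinder and [window n v m.+1] is the union of two
   windows starting at [m]; the coordinate event [w i = b] is a window. *)
Definition window (n : nat) (v : Omega) (m : nat) : set OmegaM :=
  [set w | forall i, (m <= i < n)%N -> w i = v i].

Lemma window_measurable_cylinders n m v : (m < n)%N ->
  @measurable _ (g_sigma_algebraType cylinders) (window n v m).
Proof.
elim: m v => [|m IH] v mn.
  apply: sub_sigma_algebra; right; exists n, v.
  by apply/seteqP; split => w wv i ilt; apply: wv.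
pose v' : Omega := fun l => if l == m then ~~ v m else v l.
rewrite (_ : window n v m.+1 = window n v m `|` window n v' m).
  by apply: measurableU; apply: IH; lia.
apply/seteqP; split => w /=.
  move=> wv; have [wm|wm] := eqVneq (w m) (v m).
    left => i /andP[]; rewrite leq_eqVlt => /orP[/eqP<-//|mi ilt].
    by apply: wv; rewrite mi.
  right => i /andP[mi ilt]; rewrite /v'; case: eqP => [->|/eqP im].
    by move: wm; case: (w m); case: (v m).
  by apply: wv; rewrite ilt andbT ltn_neqAle eq_sym im.
move=> [] wv i /andP[mi ilt]; first by apply: wv; rewrite ilt ltnW.
have := wv i; rewrite /v'; case: eqP => [im|_]; first by move: mi; rewrite im ltnn.
by apply; rewrite ilt ltnW.
Qed.

Lemma measurable_cylinders : @measurable _ OmegaM = <<s cylinders >>.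
Proof.
apply/seteqP; split; apply: smallest_sub; (try exact: smallest_sigma_algebra).
  move=> _ [i [b ->]].
  have -> : [set w : Omega | w i = b] = window i.+1 (fun=> b) i.
    apply/seteqP; split => w /= wb; last by apply: wb; rewrite leqnn ltnSn.
    by move=> j /andP[ij ji]; have -> : j = i by lia.
  exact: window_measurable_cylinders.
move=> _ [->|[n [v ->]]]; [exact: measurable0 | exact: measurable_cyl].
Qed.

Lemma measurable_flip k : measurable_fun setT (flip k : OmegaM -> OmegaM).
Proof.
apply: (@measurability _ _ OmegaM OmegaM setT (flip k) coord_events) => //.
move=> _ [_ [i [b ->]] <-].
rewrite setTI (_ : _ @^-1` _ = [set w | w i = if i == k.-1 then ~~ b else b]).
  exact: measurable_coord.
apply/seteqP; split => w /=; rewrite /flip; case: eqP => // _.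
  by move=> <-; rewrite negbK.
by move=> ->; rewrite negbK.
Qed.

(* [flip k] typed on [OmegaM], so that it can carry a measurable-map structure. *)
Definition flipM k : OmegaM -> OmegaM := flip k.

HB.instance Definition _ k :=
  isMeasurableFun.Build _ _ OmegaM OmegaM (flipM k) (measurable_flip k).

Lemma flip_cyl k n v : flip k @^-1` cyl n v = cyl n (flip k v).
Proof.
apply/seteqP; split => w /= wv i ilt.
  by rewrite /flip -(wv i ilt) /flip; case: eqP => // _; rewrite negbK.
by rewrite /flip wv // /flip; case: eqP => // _; rewrite negbK.
Qed.

Section FlipInvariance.
Variables (R : realType) (P : probability OmegaM R).
Hypothesis uniformP : uniform_product P.

(* Both [P] and its image under [flip k] give [2^-n] to every cylinder, and
   cylinders form a pi-system generating the sigma-algebra. *)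
Lemma measure_preimage_flip k (A : set OmegaM) :
  measurable A -> P (flip k @^-1` A) = P A.
Proof.
move=> mA; apply: (measure_unique cylinders (fun=> setT) measurable_cylinders
  cylinders_setI_closed _ _ (distribution P (flipM k)) P) => //.
- by move=> _; right; exists 0%N, (fun=> true); apply/seteqP; split.
- by apply/seteqP; split => // w _; exists 0%N.
- move=> _ [->|[n [v ->]]]; first by rewrite /distribution /pushforward !measure0.
  by change (P (flip k @^-1` cyl n v) = P (cyl n v)); rewrite flip_cyl !uniformP.
- by move=> _; change (P (flip k @^-1` setT) < +oo)%E;
    rewrite preimage_setT probability_setT ltry.
Qed.

Lemma negligible_preimage_flip k (N : set OmegaM) :
  P.-negligible N -> P.-negligible (flip k @^-1` N).
Proof.
move=> [A [mA PA NA]]; exists (flip k @^-1` A); split => //.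
- by rewrite -[X in measurable X]setTI; exact: measurable_flip.
- by rewrite measure_preimage_flip.
- by move=> w /NA.
Qed.

End FlipInvariance.

Lemma fmax_ub {W : {fset nat}} {i} : i \in W -> (i <= fmax W)%N.
Proof. by move=> iW; apply: leq_bigmax_seq. Qed.

Lemma fmax_le (W : {fset nat}) m : (forall i, i \in W -> (i <= m)%N) -> (fmax W <= m)%N.
Proof. by move=> Wm; apply/bigmax_leqP_seq => i iW _; apply: Wm. Qed.

Lemma lexlt_trans : transitive lexlt.
Proof.
elim=> [|x s IH] [|y t] [|z u] //= /orP[yx|/andP[/eqP<- st]] /orP[xz|/andP[/eqP<- tu]].
- by rewrite (ltn_trans yx xz).
- by rewrite yx.
- by rewrite xz.
- by rewrite eqxx (IH _ _ st tu) orbT.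
Qed.

Lemma lexlt_total s t : s != t -> lexlt s t || lexlt t s.
Proof.
elim: s t => [|x s IH] [|y t] //=.
by case: ltngtP => //= <-; rewrite eqseq_cons eqxx; exact: IH.
Qed.

Definition Wlt (W1 W2 : {fset nat}) : bool :=
  [|| (fmax W1 < fmax W2)%N,
      (fmax W1 == fmax W2) && (#|` W1| < #|` W2|)%N |
      [&& fmax W1 == fmax W2, #|` W1| == #|` W2| &
          lexlt (sort leq W1) (sort leq W2)]].

Lemma WleE W1 W2 : Wle W1 W2 = (W1 == W2) || Wlt W1 W2.
Proof. by []. Qed.

Lemma Wlt_trans : transitive Wlt.
Proof.
move=> W2 W1 W3; rewrite /Wlt.
move=> /or3P[?|/andP[/eqP ? ?]|/and3P[/eqP ? /eqP ? lex12]];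
move=> /or3P[?|/andP[/eqP ? ?]|/and3P[/eqP ? /eqP ? lex23]]; apply/or3P;
  try (by apply: Or31; lia);
  try (by apply: Or32; apply/andP; split; [apply/eqP|]; lia).
apply: Or33; rewrite (lexlt_trans _ _ _ lex12 lex23) andbT.
by apply/andP; split; apply/eqP; lia.
Qed.

Lemma Wlt_total W1 W2 : W1 != W2 -> Wlt W1 W2 || Wlt W2 W1.
Proof.
move=> W12; rewrite /Wlt; case: ltngtP => //= _.
case: (ltngtP #|` W1| #|` W2|) => //= _; apply: lexlt_total; apply: contra W12 => /eqP sort12.
by apply/eqP/fsetP => i; rewrite -(mem_sort leq W1) sort12 mem_sort.
Qed.

Lemma Wle_trans : transitive Wle.
Proof.
move=> W2 W1 W3; rewrite !WleE => /predU1P[->//|W12] /predU1P[<-|W23].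
  by rewrite W12 orbT.
by rewrite (Wlt_trans _ _ _ W12 W23) orbT.
Qed.

Lemma Wle_total : total Wle.
Proof.
move=> W1 W2; rewrite !WleE; have [//|W12] := eqVneq W1 W2.
by rewrite /=; exact: Wlt_total.
Qed.

Definition extend {n} (x : {ffun 'I_n -> bool}) : Omega :=
  fun l => if insub l is Some i then x i else false.

Lemma cyl_extend n (w : Omega) : cyl n (extend [ffun i : 'I_n => w i]) = cyl n w.
Proof.
by apply/seteqP; split => v /= vw i ilt; rewrite vw // /extend insubT /= ffunE.
Qed.

Section Influence.
Context {R : realType} {P : probability OmegaM R} {f : OmegaM -> bool}.
Hypotheses (uniformP : uniform_product P) (mf : boolean_function f).

(* Every witness set [W0] bounds the search to the subsets of [0, fmax W0],
   since a candidate with a larger maximum comes later in the order. *)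
Lemma Wf_fin_witness w :
  (exists W, fin_witness P f w W) -> fin_witness P f w (Wf P f w).
Proof.
move=> [W0 W0w]; pose m := fmax W0.
pose cands := fpowerset (seq_fset tt (iota 0 m.+1)).
have candsP W : (W \in cands) = (fmax W <= m)%N.
  rewrite fpowersetE; apply/fsubsetP/idP => [Wm|Wm i iW].
    by apply: fmax_le => i /Wm; rewrite seq_fsetE mem_iota.
  by rewrite seq_fsetE mem_iota /= add0n ltnS (leq_trans (fmax_ub iW)).
have [W [Wcand Ww Wmin]] := exists_minimal_in_seq (fin_witness P f w) cands
  Wle_trans Wle_total (ex_intro2 _ _ W0 (etrans (candsP W0) (leqnn m)) W0w).
suff [] : [set W | fin_witness P f w W /\
                   forall W', fin_witness P f w W' -> Wle W W'] (Wf P f w) by [].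
apply: xgetPex; exists W; split => // W' W'w.
have [W'm|mW'] := leqP (fmax W') m; first by apply: Wmin; rewrite ?candsP.
by rewrite WleE /Wlt (leq_ltn_trans _ mW') ?orbT // -candsP.
Qed.

Lemma measurable_fiber b : measurable [set v : OmegaM | f v = b].
Proof.
case: b => //; rewrite (_ : [set v | f v = false] = ~` [set v | f v]).
  exact: measurableC.
by apply/seteqP; split => v /=; case: (f v).
Qed.

Lemma measurable_influence_event k : measurable [set w : OmegaM | f (flip k w) != f w].
Proof.
have mflipf b : measurable (flip k @^-1` [set v | f v = b] : set OmegaM).
  by rewrite -[X in measurable X]setTI; exact: measurable_flip (measurable_fiber b).
rewrite (_ : [set w | _] = \big[setU/set0]_(b : bool)
                 (flip k @^-1` [set v | f v = b] `&` [set v | f v = ~~ b])).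
  by rewrite big_bool; apply: measurableU; apply: measurableI => //; exact: measurable_fiber.
apply/seteqP; split => w /=; rewrite big_bool /=.
  by case: (f w); case: (f (flip k w)) => //= _; [right|left].
by case: (f w); case: (f (flip k w)) => //= -[] [].
Qed.

(* Off the full-measure event of the witness, a point of [cyl n w] agrees with
   [w] on the whole witness set, hence takes the value [f w]. *)
Lemma fin_witness_cyl_null w W n : fin_witness P f w W -> (fmax W <= n)%N ->
  P (cyl n w `&` [set v | f v = ~~ f w]) = 0%E.
Proof.
move=> [Wpos [A [mA [PA Aw]]]] Wn.
have mS : measurable (cyl n w `&` [set v | f v = ~~ f w]).
  exact: measurableI (measurable_cyl _ _) (measurable_fiber _).
have : (P (cyl n w `&` [set v | f v = ~~ f w]) <= P (~` A))%E.
  apply: le_measure; rewrite ?inE //; first exact: measurableC.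
  move=> v [vw fv] Av; suff : f v = f w by rewrite fv; case: (f w).
  apply: Aw => // i iW; apply: vw.
  by have := fmax_ub iW; have := Wpos i iW; lia.
rewrite probability_setC // PA subee // => S0.
by apply/eqP; rewrite eq_le S0 measure_ge0.
Qed.

(* The events [cyl n v `&` [f = b]] depend on [v] only through its first [n]
   coordinates, so finitely many of them cover all the null ones. *)
Definition null_patterns n : set OmegaM :=
  \big[setU/set0]_(t : {ffun 'I_n -> bool} * bool |
                   P (cyl n (extend t.1) `&` [set v | f v = t.2]) == 0%E)
    (cyl n (extend t.1) `&` [set v | f v = t.2]).

Lemma negligible_null_patterns n : P.-negligible (null_patterns n).
Proof.
apply: negligible_null_part => t.
exact: measurableI (measurable_cyl _ _) (measurable_fiber _).
Qed.

Lemma flip_in_null_patterns k w :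
  (exists W, fin_witness P f w W) -> f (flip k w) != f w ->
  (fmax (Wf P f w) < k)%N -> null_patterns k.-1 (flip k w).
Proof.
move=> wfin flipf Wk; pose t := ([ffun i : 'I_k.-1 => w i], ~~ f w).
have flipfE : f (flip k w) = ~~ f w by move: flipf; case: (f w); case: (f _).
rewrite /null_patterns (bigD1 t) /=; last first.
  rewrite cyl_extend; apply/eqP; apply: fin_witness_cyl_null (Wf_fin_witness _ wfin) _.
  by move: Wk; lia.
left; rewrite cyl_extend; split => // i ik.
by rewrite /flip; case: eqP => // ei; move: ik; rewrite ei ltnn.
Qed.

Lemma influence_le_large_witness k : finitary P f ->
  exists M, [/\ measurable M, (influence P f k <= P M)%E &
                forall w, M w -> (k <= fmax (Wf P f w))%N].
Proof.
move=> ffin; set D := [set w : OmegaM | f (flip k w) != f w].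
have mD : measurable D := measurable_influence_event k.
have : P.-negligible
    (~` [set w | exists W, fin_witness P f w W] `|` flip k @^-1` null_patterns k.-1).
  by apply: negligibleU => //; apply: negligible_preimage_flip => //;
    exact: negligible_null_patterns.
move=> [N [mN PN sN]]; exists (D `\` N); split; first exact: measurableD.
- rewrite /influence -/D -(measureU0 (measurableD mD mN) mN PN).
  apply: le_measure; rewrite ?inE //; first exact: measurableU (measurableD _ _) _.
  by move=> w Dw; have [Nw|Nw] := pselect (N w); [right|left].
- move=> w [Dw Nw]; rewrite leqNgt; apply/negP => Wk; apply: Nw; apply: sN.
  have [wfin|] := pselect (exists W, fin_witness P f w W); last by left.
  by right; exact: flip_in_null_patterns.
Qed.

End Influence.

Theorem mainTheorem11 (R : realType) (P : probability OmegaM R)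
  (f : OmegaM -> bool) (p : R) :
  uniform_product P -> boolean_function f -> 0 < p -> knowable P f p ->
  forall k : nat, (0 < k)%N ->
    (influence P f k <= EmaxWp P f p * ((k%:R `^ p)^-1)%:E)%E.
Proof.
move=> uniformP mf p0 [ffin _] k k0.
have [M [mM infM Mk]] := influence_le_large_witness uniformP mf k ffin.
have kp0 : 0 < k%:R `^ p :> R by rewrite powR_gt0 // ltr0n.
have markov : ((k%:R `^ p)%:E * P M <= EmaxWp P f p)%E.
  apply: mul_measure_le_ge0_integral => // x Mx.
  rewrite lee_fin ge0_ler_powR ?nnegrE ?ler_nat ?(ltW p0) //; exact: Mk.
rewrite lee_pdivlMr // muleC; apply: le_trans markov.
by rewrite lee_wpmul2l // lee_fin ltW.
Qed.
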